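(* Let $n\ge 5$ and let $G\in \Theta_n$. (1) $\mathrm{irr}_t(G)\ge 2n-4$. Equality holds if and only if the degree sequence of $G$ is $(3,3,2,\ldots,2)$, i.e. two vertices of degree $3$ and $n-2$ vertices of degree $2$. (2) If the degree sequence of $G$ is not $(3,3,2,\ldots,2)$, then $\mathrm{irr}_t(G)\ge 4n-10$. Equality holds if and only if the degree sequence of $G$ is $(3,3,3,2,\ldots,2,1)$, i.e. three vertices of degree $3$, $n-4$ vertices of degree $2$ and one vertex of degree $1$.
   Context: A bicyclic graph is a simple connected graph whose number of edges equals its number of vertices plus one. For a graph $G=(V,E)$ and $w\in V$, $d_G(w)$ is the degree of $w$. The total irregularity is $\mathrm{irr}_t(G)=\frac12\sum_{x,y\in V}|d_G(x)-d_G(y)|$, where the sum runs over all ordered pairs of vertices. Degree sequences are listed in nonincreasing order. For $p,q\ge 3$ and $l\ge 2$, the $\Theta$-graph $\theta(p,q,l)$ is the graph on $p+q-l$ vertices consisting of two cycles $C_p$ and $C_q$ that have exactly $l$ common vertices, forming a common path. Equivalently, it consists of two vertices joined by three internally disjoint paths. $\Theta_n$ denotes the set of bicyclic graphs on $n$ vertices obtained from some $\theta(p,q,l)$ by attaching trees. *)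

From mathcomp Require Import all_boot.
Set Implicit Arguments. Unset Strict Implicit. Unset Printing Implicit Defensive.

Definition simple_graph (n : nat) (e : rel 'I_n) : Prop :=
  symmetric e /\ irreflexive e.

Definition deg (n : nat) (e : rel 'I_n) (x : 'I_n) : nat := #|[set y | e x y]|.

Definition nedges (n : nat) (e : rel 'I_n) : nat :=
  #|[set p : 'I_n * 'I_n | e p.1 p.2 & (p.1 < p.2)%N]|.

Definition connected (n : nat) (e : rel 'I_n) : Prop :=
  forall x y : 'I_n, connect e x y.

Definition bicyclic (n : nat) (e : rel 'I_n) : Prop :=
  simple_graph e /\ connected e /\ nedges e = n.+1.

(* [u] and [v] joined by the path u, p, v (p = list of interior vertices) *)
Definition upath (n : nat) (e : rel 'I_n) (u v : 'I_n) (p : seq 'I_n) : bool :=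
  path e u (rcons p v).

(* G contains a Theta-subgraph theta(p,q,l): two distinct vertices u, v joined
   by three internally disjoint paths, at most one of which is a single edge. *)
Definition has_theta (n : nat) (e : rel 'I_n) : Prop :=
  exists (u v : 'I_n) (p1 p2 p3 : seq 'I_n),
    [/\ u != v, upath e u v p1 && upath e u v p2 && upath e u v p3,
        uniq (u :: v :: p1 ++ p2 ++ p3) & (p2 != [::]) && (p3 != [::])].

(* Theta_n: bicyclic graphs obtained from some theta(p,q,l) by attaching trees,
   i.e. bicyclic graphs containing a theta subgraph. *)
Definition in_Theta (n : nat) (e : rel 'I_n) : Prop :=
  bicyclic e /\ has_theta e.

Definition irr_t (n : nat) (e : rel 'I_n) : nat :=
  (\sum_(x : 'I_n) \sum_(y : 'I_n)
      (maxn (deg e x) (deg e y) - minn (deg e x) (deg e y))) %/ 2.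

Definition degseq (n : nat) (e : rel 'I_n) : seq nat :=
  sort geq [seq deg e x | x <- enum 'I_n].

From mathcomp Require Import all_boot zify.
Set Implicit Arguments. Unset Strict Implicit. Unset Printing Implicit Defensive.

(* Split every degree at 3: |a - c| = |min(a,3) - min(c,3)| + |(a-3)^+ - (c-3)^+|.
   If k, b, m count the vertices of degree 1, 2 and >= 3 and E is the total
   excess of the degrees over 3, the first part of irr_t contributes
   kb + 2km + bm and the second at least E (k + b).  The handshake lemma for
   n + 1 edges gives m + E = k + 2, and the theta subgraph gives m >= 2.  So
   k = 0 forces m = 2, E = 0, i.e. degree sequence (3,3,2,...,2) and
   irr_t = 2n - 4, while k >= 1 gives irr_t >= 4n - 10, with equality exactly
   when k = 1, m = 3, E = 0. *)

Definition fcount n (f : 'I_n -> nat) (i : nat) : nat :=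
  \sum_(y : 'I_n) (f y == i : nat).

Definition absdiff (a c : nat) : nat := maxn a c - minn a c.

Lemma sum_fcount13 n (f : 'I_n -> nat) (G : nat -> nat) :
  (forall y, 1 <= f y <= 3) ->
  \sum_(y : 'I_n) G (f y) =
  G 1 * fcount f 1 + G 2 * fcount f 2 + G 3 * fcount f 3.
Proof.
move=> f_range; rewrite /fcount !big_distrr -!big_split /=.
apply: eq_bigr => y _; have := f_range y.
by case: (f y) => [|[|[|[|?]]]] //= _; lia.
Qed.

Lemma absdiff_split3 a c :
  absdiff a c = absdiff (minn a 3) (minn c 3) + absdiff (a - 3) (c - 3).
Proof. rewrite /absdiff; lia. Qed.

Lemma sum_absdiff13 n (f : 'I_n -> nat) :
  (forall y, 1 <= f y <= 3) ->
  \sum_(x : 'I_n) \sum_(y : 'I_n) absdiff (f x) (f y) =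
  2 * (fcount f 1 * fcount f 2 + 2 * fcount f 1 * fcount f 3
       + fcount f 2 * fcount f 3).
Proof.
move=> f_range.
under eq_bigr => x _ do rewrite (sum_fcount13 (absdiff (f x)) f_range).
rewrite (sum_fcount13 (fun u => absdiff u 1 * fcount f 1 + absdiff u 2 * fcount f 2
                                + absdiff u 3 * fcount f 3)) //=.
rewrite /absdiff /=; lia.
Qed.

(* Each pair with g y = 0 contributes g x twice, as (x, y) and as (y, x). *)
Lemma sum_absdiff_ge n (g : 'I_n -> nat) :
  2 * ((\sum_(y : 'I_n) g y) * fcount g 0) <=
  \sum_(x : 'I_n) \sum_(y : 'I_n) absdiff (g x) (g y).
Proof.
apply: (@leq_trans (\sum_(x : 'I_n) \sum_(y : 'I_n) (g x * (g y == 0) + g y * (g x == 0)))).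
  rewrite [X in _ <= X](eq_bigr (fun x => g x * fcount g 0 + (g x == 0) * \sum_(y : 'I_n) g y)).
    by rewrite big_split /= -!big_distrl /= -/(fcount g 0); lia.
  move=> x _; rewrite big_split /= /fcount !big_distrr /=; congr (_ + _).
  by apply: eq_bigr => y _; rewrite mulnC.
apply: leq_sum => x _; apply: leq_sum => y _; rewrite /absdiff.
by case: (g x) => [|a]; case: (g y) => [|c] /=; lia.
Qed.

Lemma degE n (e : rel 'I_n) x : deg e x = \sum_(y : 'I_n) (e x y : nat).
Proof. by rewrite /deg -sum1_card big_mkcond /=; apply: eq_bigr => y _; rewrite inE. Qed.

Lemma nedgesE n (e : rel 'I_n) :
  nedges e = \sum_(x : 'I_n) \sum_(y : 'I_n) (e x y && (x < y) : nat).
Proof.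
rewrite /nedges -sum1_card pair_big big_mkcond /=.
by apply: eq_bigr => p _; rewrite inE.
Qed.

Lemma sum_deg n (e : rel 'I_n) : simple_graph e ->
  \sum_(x : 'I_n) deg e x = 2 * nedges e.
Proof.
move=> [e_sym e_irr].
have edge_split x y : (e x y : nat) = (e x y && (x < y)) + (e y x && (y < x)).
  rewrite (e_sym y x); case exy: (e x y) => //=.
  case: (ltngtP x y) => //= /val_inj xy.
  by move: exy; rewrite xy e_irr.
under eq_bigr => x _ do rewrite degE (eq_bigr _ (fun y _ => edge_split x y)) big_split.
by rewrite big_split /= [X in _ + X]exchange_big /= -nedgesE addnn -mul2n.
Qed.

Lemma deg_gt0 n (e : rel 'I_n) x : 1 < n -> connected e -> 0 < deg e x.
Proof.
case: n e x => [|[|n]] // e x _ e_conn.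
pose y : 'I_n.+2 := if x == ord0 then ord_max else ord0.
have xy : x != y by rewrite /y; case: (eqVneq x ord0) => [->|].
have /connectP [[|z p] /= xzp y_last] := e_conn x y.
  by rewrite y_last eqxx in xy.
by apply/card_gt0P; exists z; rewrite inE; case/andP: xzp.
Qed.

Lemma deg_ge_uniq n (e : rel 'I_n) u (s : seq 'I_n) :
  uniq s -> all (e u) s -> size s <= deg e u.
Proof.
move=> s_uniq /allP s_adj; rewrite /deg cardE.
by apply: uniq_leq_size => // y /s_adj eu; rewrite mem_enum inE.
Qed.

Lemma uniq_pick3 (T : eqType) (s1 s2 s3 : seq T) x1 x2 x3 :
  uniq (s1 ++ s2 ++ s3) -> x1 \in s1 -> x2 \in s2 -> x3 \in s3 ->
  uniq [:: x1; x2; x3].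
Proof.
rewrite !cat_uniq => /and3P [_ s1_disj /and3P [_ s2_disj _]] x1s1 x2s2 x3s3.
have x2n1 : x2 \notin s1 by apply: (hasPn s1_disj); rewrite mem_cat x2s2.
have x3n1 : x3 \notin s1 by apply: (hasPn s1_disj); rewrite mem_cat x3s3 orbT.
have x3n2 : x3 \notin s2 by apply: (hasPn s2_disj).
rewrite /= !inE negb_or andbT.
by rewrite -!andbA; apply/and3P; split; apply/eqP => E;
  [move: x2n1 | move: x3n1 | move: x3n2]; rewrite -E ?x1s1 ?x2s2.
Qed.

Lemma upath_head n (e : rel 'I_n) u v p : upath e u v p -> e u (head v p).
Proof. by case: p => [|a p] /= /andP []. Qed.

Lemma upath_last n (e : rel 'I_n) u v p :
  symmetric e -> upath e u v p -> e v (last u p).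
Proof. by move=> e_sym; rewrite /upath rcons_path e_sym => /andP []. Qed.

Lemma head_mem_cons (T : eqType) (v : T) p : head v p \in v :: p.
Proof. by case: p => [|a p]; rewrite /= !inE eqxx ?orbT. Qed.

Lemma head_mem (T : eqType) (v : T) p : p != [::] -> head v p \in p.
Proof. by case: p => [|a p] //= _; rewrite inE eqxx. Qed.

Lemma last_mem (T : eqType) (u : T) p : p != [::] -> last u p \in p.
Proof. by case: p => [|a p] //= _; apply: mem_last. Qed.

(* Both ends of a theta subgraph have three distinct neighbours on its paths. *)
Lemma has_theta_deg3 n (e : rel 'I_n) : simple_graph e -> has_theta e ->
  exists u v, [/\ u != v, 2 < deg e u & 2 < deg e v].
Proof.
move=> [e_sym _] [u [v [p1 [p2 [p3 [uv /andP [/andP [up1 up2] up3] U]]]]]].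
case/andP => p2_nil p3_nil; exists u, v; split => //.
  apply: (@deg_ge_uniq _ _ _ [:: head v p1; head v p2; head v p3]).
    apply: (@uniq_pick3 _ (v :: p1) p2 p3); rewrite ?head_mem_cons ?head_mem //.
    by case/andP: U.
  by rewrite /= !upath_head.
apply: (@deg_ge_uniq _ _ _ [:: last u p1; last u p2; last u p3]).
  apply: (@uniq_pick3 _ (u :: p1) p2 p3); rewrite ?mem_last ?last_mem //.
  by move: U; rewrite /= !inE negb_or => /and3P [/andP [_ ->] _ ->].
by rewrite /= !(upath_last e_sym).
Qed.

Lemma count_degseq n (e : rel 'I_n) (P : pred nat) :
  count P (degseq e) = \sum_(x : 'I_n) (P (deg e x) : nat).
Proof. by rewrite count_sort count_map -sum1_count big_mkcond big_enum. Qed.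

Lemma degseq_eq n (e : rel 'I_n) (L : seq nat) :
  sorted geq L -> (forall P : pred nat, count P (degseq e) = count P L) ->
  degseq e = L.
Proof.
move=> L_sorted count_eq.
have geq_total : total geq by move=> a c; rewrite /= leq_total.
have geq_trans : transitive geq by move=> a c d /= ca dc; apply: leq_trans dc ca.
have geq_anti : antisymmetric geq by move=> a c /=; rewrite andbC; apply: anti_leq.
rewrite -(sorted_sort geq_trans L_sorted); apply/(perm_sortP geq_total geq_trans geq_anti).
by apply/permP => P; rewrite -(count_sort geq) count_eq.
Qed.

Lemma path_geq_nseq_cat x a k (s : seq nat) :
  a <= x -> path geq a s -> path geq x (nseq k a ++ s).
Proof.
elim: k x => [|k IH] x ax /=; last by move=> a_s; rewrite ax IH.
by case: s => [|y s] //= /andP [ya ->]; rewrite andbT (leq_trans ya ax).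
Qed.

Lemma sorted_nseq321 k l m : sorted geq (nseq m 3 ++ nseq l 2 ++ nseq k 1).
Proof.
apply: (@path_sorted _ _ 3); rewrite -[nseq k 1]cats0.
by do 3!apply: path_geq_nseq_cat => //.
Qed.

Section ThetaDegrees.
Variables (n : nat) (e : rel 'I_n).
Hypotheses (n_ge5 : 5 <= n) (e_Theta : in_Theta e).

Definition trunc_deg (x : 'I_n) : nat := minn (deg e x) 3.
Definition excess_deg (x : 'I_n) : nat := deg e x - 3.

Local Notation n1 := (fcount trunc_deg 1).
Local Notation n2 := (fcount trunc_deg 2).
Local Notation n3 := (fcount trunc_deg 3).
Local Notation exc := (\sum_(x : 'I_n) excess_deg x).

Let e_simple : simple_graph e. Proof. by case: e_Theta => [[]]. Qed.

Lemma trunc_deg_range x : 1 <= trunc_deg x <= 3.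
Proof.
have [[_ [e_conn _]] _] := e_Theta.
have n_gt1 : 1 < n by lia.
by have := deg_gt0 x n_gt1 e_conn; rewrite /trunc_deg; lia.
Qed.

Lemma fcount_trunc_deg_sum : n1 + n2 + n3 = n.
Proof.
have := sum_fcount13 (fun _ => 1) trunc_deg_range.
by rewrite sum_nat_const card_ord !mul1n muln1.
Qed.

Lemma fcount_trunc_deg_handshake : n1 + 2 * n2 + 3 * n3 + exc = 2 * n + 2.
Proof.
have [[_ [_ e_size]] _] := e_Theta.
have -> : 2 * n + 2 = 2 * n.+1 by lia.
rewrite -e_size -sum_deg //.
have := sum_fcount13 id trunc_deg_range; rewrite /= mul1n => <-.
by rewrite -big_split; apply: eq_bigr => x _; rewrite /= /trunc_deg /excess_deg; lia.
Qed.

Lemma fcount_trunc_deg3_ge2 : 2 <= n3.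
Proof.
have [_ e_theta] := e_Theta.
have [u [v [uv du dv]]] := has_theta_deg3 e_simple e_theta.
rewrite /fcount (bigD1 u) // (bigD1 v) /=; last by rewrite eq_sym.
by rewrite /trunc_deg (minn_idPr du) (minn_idPr dv) eqxx addnA leq_addr.
Qed.

Lemma fcount_trunc_deg12_le : n1 + n2 <= fcount excess_deg 0.
Proof.
rewrite /fcount -big_split /=; apply: leq_sum => y _.
by rewrite /trunc_deg /excess_deg; case: (deg e y) => [|[|[|[|?]]]].
Qed.

Lemma no_excess_deg_le3 x : exc = 0 -> deg e x <= 3.
Proof.
by move/eqP; rewrite sum_nat_eq0 => /forallP /(_ x) /eqP; rewrite /excess_deg; lia.
Qed.

Lemma irr_t_split :
  irr_t e = (2 * (n1 * n2 + 2 * n1 * n3 + n2 * n3) +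
    \sum_(x : 'I_n) \sum_(y : 'I_n) absdiff (excess_deg x) (excess_deg y)) %/ 2.
Proof.
rewrite -sum_absdiff13; last exact: trunc_deg_range.
rewrite -big_split /irr_t; congr (_ %/ 2); apply: eq_bigr => x _.
by rewrite -big_split; apply: eq_bigr => y _; apply: absdiff_split3.
Qed.

Lemma irr_t_ge :
  n1 * n2 + 2 * n1 * n3 + n2 * n3 + exc * fcount excess_deg 0 <= irr_t e.
Proof. by have := sum_absdiff_ge excess_deg; rewrite irr_t_split; lia. Qed.

Lemma irr_t_no_excess : exc = 0 -> irr_t e = n1 * n2 + 2 * n1 * n3 + n2 * n3.
Proof.
move=> exc0; rewrite irr_t_split big1 ?addn0 ?mulKn // => x _.
apply: big1 => y _; rewrite /absdiff /excess_deg.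
by have := no_excess_deg_le3 x exc0; have := no_excess_deg_le3 y exc0; lia.
Qed.

Lemma count_degseq_trunc i :
  1 <= i <= 2 -> count (pred1 i) (degseq e) = fcount trunc_deg i.
Proof.
move=> i12; rewrite count_degseq; apply: eq_bigr => x _ /=.
by rewrite /trunc_deg; case: (deg e x) i i12 => [|[|[|[|?]]]] [|[|[|?]]].
Qed.

Lemma degseq_no_excess :
  exc = 0 -> degseq e = nseq n3 3 ++ nseq n2 2 ++ nseq n1 1.
Proof.
move=> exc0; apply: degseq_eq; first exact: sorted_nseq321.
move=> P; rewrite count_degseq !count_cat !count_nseq.
rewrite (eq_bigr (fun x => P (trunc_deg x) : nat)); last first.
  by move=> x _; rewrite /trunc_deg (minn_idPl (no_excess_deg_le3 x exc0)).
by rewrite (sum_fcount13 (fun v => P v : nat) trunc_deg_range); lia.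
Qed.

Lemma fcount_trunc_deg1_eq0 : n1 = 0 -> exc = 0 /\ n3 = 2.
Proof.
have := fcount_trunc_deg_sum; have := fcount_trunc_deg_handshake.
have := fcount_trunc_deg3_ge2; lia.
Qed.

Lemma irr_t_ge_4n10 : 0 < n1 -> 4 * n - 10 <= irr_t e.
Proof.
have := fcount_trunc_deg_sum; have := fcount_trunc_deg_handshake.
have := fcount_trunc_deg3_ge2; have := fcount_trunc_deg12_le; have := irr_t_ge.
nia.
Qed.

Lemma irr_t_le_4n10 :
  0 < n1 -> irr_t e <= 4 * n - 10 -> [/\ n1 = 1, n3 = 3 & exc = 0].
Proof.
have := fcount_trunc_deg_sum; have := fcount_trunc_deg_handshake.
have := fcount_trunc_deg3_ge2; have := fcount_trunc_deg12_le; have := irr_t_ge.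
by move=> *; split; nia.
Qed.

Lemma irr_t_eq_2n4 : irr_t e = 2 * n - 4 <-> n1 = 0.
Proof.
split=> [irr_eq | n1_0].
  by case: (posnP n1) => // /irr_t_ge_4n10; lia.
have [exc0 n3_2] := fcount_trunc_deg1_eq0 n1_0.
by rewrite irr_t_no_excess // n1_0 n3_2; have := fcount_trunc_deg_sum; lia.
Qed.

Lemma irr_t_ge_2n4 : 2 * n - 4 <= irr_t e.
Proof. by case: (posnP n1) => [/irr_t_eq_2n4 -> | /irr_t_ge_4n10]; lia. Qed.

Lemma irr_t_eq_4n10 :
  0 < n1 -> irr_t e = 4 * n - 10 <-> [/\ n1 = 1, n3 = 3 & exc = 0].
Proof.
move=> n1_gt0; split=> [irr_eq | [n1_1 n3_3 exc0]].
  by apply: irr_t_le_4n10; rewrite ?irr_eq.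
by rewrite irr_t_no_excess // n1_1 n3_3; have := fcount_trunc_deg_sum; lia.
Qed.

Lemma degseq_eq_33_2 : degseq e = [:: 3; 3] ++ nseq (n - 2) 2 <-> n1 = 0.
Proof.
split=> [ds | n1_0].
  by rewrite -count_degseq_trunc // ds count_cat count_nseq.
have [exc0 n3_2] := fcount_trunc_deg1_eq0 n1_0.
have n2E : n2 = n - 2 by have := fcount_trunc_deg_sum; lia.
by rewrite degseq_no_excess // n1_0 n2E n3_2 cats0.
Qed.

Lemma degseq_eq_333_2_1 :
  degseq e = [:: 3; 3; 3] ++ nseq (n - 4) 2 ++ [:: 1] <->
  [/\ n1 = 1, n3 = 3 & exc = 0].
Proof.
split=> [ds | [n1_1 n3_3 exc0]].
  have n1_1 : n1 = 1 by rewrite -count_degseq_trunc // ds !count_cat count_nseq.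
  have n2E : n2 = n - 4.
    by rewrite -count_degseq_trunc // ds !count_cat count_nseq /=; lia.
  have := fcount_trunc_deg_sum; have := fcount_trunc_deg_handshake.
  by split=> //; lia.
have n2E : n2 = n - 4 by have := fcount_trunc_deg_sum; lia.
by rewrite degseq_no_excess // n1_1 n2E n3_3.
Qed.

End ThetaDegrees.

Theorem theorem14 (n : nat) (e : rel 'I_n) :
  5 <= n -> in_Theta e ->
  (2 * n - 4 <= irr_t e /\
   (irr_t e = 2 * n - 4 <-> degseq e = [:: 3; 3] ++ nseq (n - 2) 2)) /\
  (degseq e <> [:: 3; 3] ++ nseq (n - 2) 2 ->
   4 * n - 10 <= irr_t e /\
   (irr_t e = 4 * n - 10 <->
    degseq e = [:: 3; 3; 3] ++ nseq (n - 4) 2 ++ [:: 1])).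
Proof.
move=> n_ge5 e_Theta.
have ds3322 := degseq_eq_33_2 n_ge5 e_Theta.
split.
  split; first exact: irr_t_ge_2n4.
  exact: iff_trans (irr_t_eq_2n4 n_ge5 e_Theta) (iff_sym ds3322).
move=> not3322; have n1_gt0 : 0 < fcount (trunc_deg e) 1.
  by rewrite lt0n; apply/eqP => /ds3322.
split; first exact: irr_t_ge_4n10.
exact: iff_trans (irr_t_eq_4n10 n_ge5 e_Theta n1_gt0)
                 (iff_sym (degseq_eq_333_2_1 n_ge5 e_Theta)).
Qed.
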